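(* Let $J$ be a smooth almost complex structure defined on a neighborhood $U$ of the origin in $\mathbb{C}^n$, with coordinates $Z=(w,z)$, $w\in\mathbb{C}$, $z=(z_2,\dots,z_n)\in\mathbb{C}^{n-1}$, such that $J(0)=J_{st}$ and the map $\zeta\mapsto(\zeta,0,\dots,0)$ is $J$-holomorphic (on the set of $\zeta$ with $(\zeta,0,\dots,0)\in U$). For $\delta>0$ let $\Lambda_\delta(w,z) = (\delta^{-1/2}w, \delta^{-1}z)$ and let $J_\delta := (\Lambda_\delta)_*(J) = d\Lambda_\delta\circ J\circ (d\Lambda_\delta)^{-1}$, an almost complex structure on $\Lambda_\delta(U)$. Then for every $k>0$ and every compact set $K\subset\mathbb{C}^n$ we have $\|J_\delta - J_{st}\|_{C^k(K)} \to 0$ as $\delta\to 0$.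
   Context: $J_{st}$ is the standard complex structure of $\mathbb{C}^n$; almost complex structures on domains of $\mathbb{C}^n\cong\mathbb{R}^{2n}$ are viewed as smooth real $2n\times 2n$ matrix-valued functions. A smooth map $f$ from a domain of $\mathbb{C}$ to $U$ is $J$-holomorphic if $df\circ J_{st} = J\circ df$. For a compact $K$, $J_\delta$ is defined on $K$ for all sufficiently small $\delta$. *)

From HB Require Import structures.
From mathcomp Require Import all_boot all_order all_algebra.
From mathcomp Require Import all_classical all_reals all_analysis.
Set Implicit Arguments. Unset Strict Implicit. Unset Printing Implicit Defensive.
Import Order.TTheory GRing.Theory Num.Theory.
Import numFieldNormedType.Exports.
Local Open Scope classical_set_scope.
Local Open Scope ring_scope.

(* Real coordinates on C^m = R^(2m): index 2j is Re of the j-th complex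
   coordinate, index 2j+1 its Im.  Points and tangent vectors are column
   vectors; a real (N x N) matrix acts on tangent vectors by left
   multiplication. *)

(* The standard complex structure J_st: J e_(2j) = e_(2j+1), J e_(2j+1) = -e_(2j). *)
Definition Jst (R : realType) (N : nat) : 'M[R]_N :=
  \matrix_(i < N, j < N)
    (if ~~ odd j && (i == j.+1 :> nat) then 1
     else if odd j && (i.+1 == j :> nat) then -1 else 0).

Definition basis_vec (R : realType) (N : nat) (i : 'I_N) : 'cV[R]_N :=
  \col_(l < N) (if l == i then 1 else 0).

Fixpoint partials (R : realType) (N : nat) (W : normedModType R)
  (s : seq 'I_N) (f : 'cV[R]_N -> W) : 'cV[R]_N -> W :=
  match s with
  | [::] => f
  | i :: s' => fun x => 'D_(basis_vec R i) (partials s' f) x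
  end.

Definition smooth_on (R : realType) (N : nat) (W : normedModType R)
  (U : set 'cV[R]_N) (f : 'cV[R]_N -> W) : Prop :=
  forall (s : seq 'I_N) (x : 'cV[R]_N), U x -> differentiable (partials s f) x.

Definition J_holomorphic (R : realType) (N : nat) (D : set 'cV[R]_2)
  (J : 'cV[R]_N -> 'M[R]_N) (f : 'cV[R]_2 -> 'cV[R]_N) : Prop :=
  forall zeta, D zeta -> differentiable f zeta /\
    forall v : 'cV[R]_2, 'd f zeta (Jst R 2 *m v) = J (f zeta) *m ('d f zeta v).

(* Dimension: C^n with n = p + 1, i.e. R^(2p+2); w = coordinates 0,1,
   z = coordinates 2, ..., 2p+1. *)
Definition emb (R : realType) (p : nat) (zeta : 'cV[R]_2) : 'cV[R]_(p.*2.+2) :=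
  \col_(i < p.*2.+2)
    (if (i : nat) == 0%N then zeta ord0 ord0
     else if (i : nat) == 1%N then zeta ord_max ord0 else 0).

(* The linear map Lambda_delta(w,z) = (delta^{-1/2} w, delta^{-1} z), as a
   matrix; it is its own differential. *)
Definition Lam (R : realType) (p : nat) (d : R) : 'M[R]_(p.*2.+2) :=
  diag_mx (\row_(i < p.*2.+2)
    (if (i < 2)%N then (Num.sqrt d)^-1 else d^-1)).

Definition Lambda (R : realType) (p : nat) (d : R) (Z : 'cV[R]_(p.*2.+2))
  : 'cV[R]_(p.*2.+2) := Lam p d *m Z.

Definition Jdelta (R : realType) (p : nat) (J : 'cV[R]_(p.*2.+2) -> 'M[R]_(p.*2.+2))
  (d : R) (Z : 'cV[R]_(p.*2.+2)) : 'M[R]_(p.*2.+2) :=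
  Lam p d *m J (invmx (Lam p d) *m Z) *m invmx (Lam p d).

From HB Require Import structures.
From mathcomp Require Import all_boot all_order all_algebra.
From mathcomp Require Import all_classical all_reals all_analysis.
From mathcomp Require Import zify.
Set Implicit Arguments.
Unset Strict Implicit.
Unset Printing Implicit Defensive.

Import Order.TTheory GRing.Theory Num.Theory.
Import numFieldNormedType.Exports.
Local Open Scope classical_set_scope.
Local Open Scope ring_scope.

(* Put delta = t^2, so that Lambda_delta^-1 = diag (t, t, t^2, ..., t^2): coordinate k
   is scaled by t^(weight k), with weight 1 on w and 2 on z.  By the chain rule the
   (i, j) entry of d^s (J_delta - J_st) at Y is t^e times the (i, j) entry of d^s J at
   Lambda_delta^-1 Y (minus J_st i j when s is empty), where
   e = sum_(k in s) weight k + weight j - weight i.  As Lambda_delta^-1 Y -> 0 uniformly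
   on K, the entries with e >= 1 tend to 0, and so do the entries with e = 0 off the
   lower-left (z-row, w-column) block, since J(0) = J_st.  What remains is that block,
   with s empty (e = -1) or s a single w-direction (e = 0).  J-holomorphy of the w-axis
   says J(w, 0) vanishes on this block, hence so do its w-derivatives at 0, and a
   first-order Taylor expansion of J at 0 absorbs the factor 1/t. *)

Section Matrices.
Variable R : realType.

Lemma mx_entry_le_norm m n (X : 'M[R]_(m, n)) i j : `|X i j| <= `|X|.
Proof.
rewrite [leRHS]/Num.Def.normr /= mx_normrE.
exact: (le_bigmax _ (fun ij : 'I_m * 'I_n => `|X ij.1 ij.2|) (i, j)).
Qed.

Lemma mx_norm_le_entries m n (X : 'M[R]_(m, n)) e : 0 <= e ->
  (forall i j, `|X i j| <= e) -> `|X| <= e.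
Proof.
move=> e0 Xe; rewrite [leLHS]/Num.Def.normr /= mx_normrE.
by apply/bigmax_leP; split => // ij _; apply: Xe.
Qed.

Lemma mx_entryB m n (X Y : 'M[R]_(m, n)) i j : (X - Y) i j = X i j - Y i j.
Proof. by rewrite !mxE. Qed.

Lemma mx_entry_dist_le m n (X Y : 'M[R]_(m, n)) i j : `|X i j - Y i j| <= `|X - Y|.
Proof. by rewrite -mx_entryB mx_entry_le_norm. Qed.

Lemma diag_mulmx_norm_le n k (a : 'rV[R]_n) (X : 'M[R]_(n, k)) :
  `|diag_mx a *m X| <= `|a| * `|X|.
Proof.
apply: mx_norm_le_entries => [|i j]; first exact: mulr_ge0.
rewrite mul_diag_mx mxE normrM.
by apply: ler_pM => //; apply: mx_entry_le_norm.
Qed.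

Lemma mulmx_basis_vec_entry m n (A : 'M[R]_(m, n)) i j : (A *m basis_vec R j) i 0 = A i j.
Proof.
rewrite mxE (bigD1 j) //= mxE eqxx mulr1 big1 ?addr0 // => k /negbTE kj.
by rewrite mxE kj mulr0.
Qed.

End Matrices.

Section DirectionalDerivative.
Variables (R : realType) (V V' W W' : normedModType R).

Lemma linear_bounded_cvg T (F : set_system T) {FF : Filter F}
    (L : {linear W -> W'}) (C : R) (q : T -> W) (l : W) :
  (forall x, `|L x| <= C * `|x|) -> q @ F --> l -> L \o q @ F --> L l.
Proof.
move=> LC /cvgrPdist_le ql; apply/cvgrPdist_le => e e0.
have C1 : 0 < `|C| + 1 by rewrite ltr_wpDl.
apply: filterS (ql _ (divr_gt0 e0 C1)) => x lqx /=.
rewrite -linearB (le_trans (LC _)) // (le_trans (ler_wpM2r _ (ler_norm C))) //.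
rewrite (le_trans (ler_wpM2l _ lqx)) // mulrA ler_pdivrMr // mulrC.
by rewrite ler_wpM2l ?ltW // ltrDl.
Qed.

Lemma derive_subr_cst (f : V -> W) (c : W) x v :
  'D_v (fun y => f y - c) x = 'D_v f x.
Proof.
by rewrite /derive /=; under eq_fun do rewrite opprB addrA subrK.
Qed.

Lemma derive_linear_comp (Q : V' -> W) (L : {linear W -> W'})
    (M : {linear V -> V'}) (C : R) x v :
  (forall y, `|L y| <= C * `|y|) -> derivable Q (M x) (M v) ->
  'D_v (fun y => L (Q (M y))) x = L ('D_(M v) Q (M x)).
Proof.
move=> LC dQ; rewrite /derive /=.
under eq_fun do rewrite (linearP M) -(linearB L) -(linearZ_LR L).
apply: cvg_lim => //; exact: linear_bounded_cvg LC dQ.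
Qed.

End DirectionalDerivative.

Section Partials.
Variables (R : realType) (n : nat).
Implicit Types (a b m : 'rV[R]_n) (X : 'M[R]_n).

Definition sandwich a b X := diag_mx a *m X *m diag_mx b.

Fact sandwich_is_linear a b : linear (sandwich a b).
Proof. by move=> k X Y; rewrite /sandwich mulmxDr mulmxDl -!scalemxAr -scalemxAl. Qed.

HB.instance Definition _ a b :=
  GRing.isLinear.Build R 'M[R]_n 'M[R]_n *:%R (sandwich a b) (sandwich_is_linear a b).

Lemma sandwich_entry a b X i j : sandwich a b X i j = a 0 i * X i j * b 0 j.
Proof. by rewrite /sandwich mul_mx_diag mxE mul_diag_mx mxE. Qed.

Lemma sandwichZl (c : R) a b X : sandwich (c *: a) b X = c *: sandwich a b X.
Proof. by apply/matrixP => i j; rewrite [RHS]mxE !sandwich_entry mxE !mulrA. Qed.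

Lemma sandwich_norm_le a b X : `|sandwich a b X| <= `|a| * `|b| * `|X|.
Proof.
apply: mx_norm_le_entries => [|i j]; first by rewrite !mulr_ge0.
rewrite sandwich_entry !normrM mulrAC.
apply: ler_pM; rewrite ?mulr_ge0 //; first apply: ler_pM => //.
all: exact: mx_entry_le_norm.
Qed.

Lemma diag_mulmx_basis_vec m l : diag_mx m *m basis_vec R l = m 0 l *: basis_vec R l.
Proof.
apply/matrixP => i j; rewrite mul_diag_mx !mxE.
by case: eqP => [->|]; rewrite ?mulr1 ?mulr0.
Qed.

Lemma partials_subr_cst (W : normedModType R) (f : 'cV[R]_n -> W) (c : W) s :
  s != [::] -> partials s (fun Y => f Y - c) = partials s f.
Proof.
case: s => [//|i s] _; elim: s i => [|j s IH] i.
  by apply: funext => Y /=; rewrite derive_subr_cst.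
have -> : partials [:: i, j & s] (fun Y => f Y - c)
  = fun x => 'D_(basis_vec R i) (partials (j :: s) (fun Y => f Y - c)) x by [].
by rewrite IH.
Qed.

Lemma partials_sandwich_dilate (U : set 'cV[R]_n) (J : 'cV[R]_n -> 'M[R]_n) m a b :
  open U -> smooth_on U J -> forall s Y, U (diag_mx m *m Y) ->
  partials s (fun Y => sandwich a b (J (diag_mx m *m Y))) Y
  = sandwich ((\prod_(l <- s) m 0 l) *: a) b (partials s J (diag_mx m *m Y)).
Proof.
move=> oU sJ s; elim: s => [|l s IH] Y UmY; first by rewrite big_nil scale1r.
have near_U : \forall Y' \near Y, U (diag_mx m *m Y').
  have := linear_bounded_cvg (diag_mulmx_norm_le m) (@cvg_id _ (nbhs Y)).
  by apply; apply: open_nbhs_nbhs.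
have near_IH : \forall Y' \near Y,
    partials s (fun Y => sandwich a b (J (diag_mx m *m Y))) Y'
    = sandwich ((\prod_(l <- s) m 0 l) *: a) b (partials s J (diag_mx m *m Y')).
  by near=> Y'; apply: IH; near: Y'.
rewrite /= (near_eq_derive _ near_IH).
rewrite (derive_linear_comp (M := mulmx (diag_mx m)) (sandwich_norm_le _ b)).
  rewrite /= diag_mulmx_basis_vec !deriveE; try exact: sJ.
  by rewrite !linearZ_LR big_cons -scalerA sandwichZl.
by apply: diff_derivable; apply: sJ.
Unshelve. all: by end_near.
Qed.

End Partials.

Section WAxis.
Variables (R : realType) (p : nat).
Local Notation N := p.*2.+2.

Fact emb_is_linear : linear (@emb R p).
Proof.
move=> k a b; apply/matrixP => i j; rewrite !mxE.
by case: ifP => _; [|case: ifP => _]; rewrite ?mulr0 ?addr0.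
Qed.

HB.instance Definition _ :=
  GRing.isLinear.Build R 'cV[R]_2 'cV[R]_N *:%R (@emb R p) emb_is_linear.

Lemma derive_emb (z w : 'cV[R]_2) : 'D_w (@emb R p) z = emb p w.
Proof.
rewrite /derive; apply: lim_near_cst => //; near=> h.
rewrite /= linearP addrK scalerA mulVf ?scale1r //.
by near: h; exact: nbhs_dnbhs_neq.
Unshelve. all: by end_near.
Qed.

Lemma emb_basis_vec (l : 'I_N) (l2 : (l < 2)%N) :
  emb p (basis_vec R (Ordinal l2)) = basis_vec R l.
Proof.
apply/matrixP => k c; rewrite !mxE /=.
by case: k l l2 => [[|[|k]] hk] [[|[|l]] hl] l2.
Qed.

Lemma J_holomorphic_emb_lower_left (D : set 'cV[R]_2) (J : 'cV[R]_N -> 'M[R]_N) :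
  J_holomorphic D J (@emb R p) -> forall z, D z ->
  forall i j : 'I_N, (2 <= i)%N -> (j < 2)%N -> J (emb p z) i j = 0.
Proof.
move=> Jhol z Dz i j i2 j2; have [demb /(_ (basis_vec R (Ordinal j2)))] := Jhol z Dz.
rewrite -!deriveE // !derive_emb emb_basis_vec => /matrixP /(_ i 0).
rewrite mulmx_basis_vec_entry mxE => <-.
by case: i i2 => [[|[|i]] hi].
Qed.

Lemma diff_emb_lower_left (U : set 'cV[R]_N) (J : 'cV[R]_N -> 'M[R]_N) :
  open U -> U 0 -> J_holomorphic [set z | U (emb p z)] J (@emb R p) ->
  differentiable J 0 ->
  forall z (i j : 'I_N), (2 <= i)%N -> (j < 2)%N -> ('d J 0 (emb p z)) i j = 0.
Proof.
move=> oU U0 Jhol dJ z i j i2 j2; rewrite -deriveE //.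
have J0ij : J 0 i j = 0.
  by rewrite -(linear0 (@emb R p)) (J_holomorphic_emb_lower_left Jhol) //= linear0.
suff : [set A : 'M[R]_N | A i j = 0] ('D_(emb p z) J 0) by [].
apply: closed_cvg (@diff_derivable _ _ _ J 0 (emb p z) dJ).
  exact: (continuous_closedP _).1 (@coord_continuous R N N i j) _ (@closed_eq R 0).
have near_U : \forall h \near (0 : R), U (h *: emb p z).
  by apply: near0Z; apply: open_nbhs_nbhs.
near=> h; rewrite /= addr0 !mxE J0ij -linearZ.
rewrite (J_holomorphic_emb_lower_left Jhol) ?subrr ?mulr0 //= linearZ.
by near: h; apply: cvg_within.
Unshelve. all: by end_near.
Qed.

End WAxis.

Section Dilation.
Variables (R : realType) (p : nat).
Local Notation N := p.*2.+2.
Implicit Types (t : R) (Y : 'cV[R]_N) (J : 'cV[R]_N -> 'M[R]_N).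

Definition weight (i : 'I_N) : nat := if (i < 2)%N then 1%N else 2%N.

Definition dil t : 'rV[R]_N := \row_i t ^+ weight i.

Lemma weight_gt0 i : (0 < weight i)%N.
Proof. by rewrite /weight; case: ifP. Qed.

Lemma weight_le2 i : (weight i <= 2)%N.
Proof. by rewrite /weight; case: ifP. Qed.

Lemma weight_ltE (i j : 'I_N) : (weight j < weight i)%N = (2 <= i)%N && (j < 2)%N.
Proof. by rewrite /weight [(2 <= i)%N]leqNgt; case: (i < 2)%N; case: (j < 2)%N. Qed.

Lemma sum_weight_le_weight (l : 'I_N) s (i j : 'I_N) :
  (\sum_(k <- l :: s) weight k + weight j <= weight i)%N ->
  [/\ s = [::], (l < 2)%N, (2 <= i)%N & (j < 2)%N].
Proof.
case: s => [|k s]; rewrite !big_cons.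
  rewrite big_nil addn0 /weight [(2 <= i)%N]leqNgt.
  by case: (i < 2)%N; case: (j < 2)%N; case: (l < 2)%N.
have := weight_gt0 j; have := weight_gt0 k; have := weight_gt0 l; have := weight_le2 i.
lia.
Qed.

Lemma sum_weight_ge (s : seq 'I_N) : (size s <= \sum_(k <- s) weight k)%N.
Proof.
elim: s => [|k s IH]; first by rewrite big_nil.
by rewrite big_cons /= -add1n leq_add ?weight_gt0.
Qed.

Lemma dil_gt0 t i : 0 < t -> 0 < dil t 0 i.
Proof. by move=> t0; rewrite mxE exprn_gt0. Qed.

Lemma exprn_le_self t n : 0 <= t <= 1 -> (0 < n)%N -> t ^+ n <= t.
Proof.
case/andP=> t0 t1; case: n => // n _.
by rewrite exprS -[leRHS]mulr1 ler_wpM2l // exprn_ile1.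
Qed.

Lemma dil_norm_le t : 0 < t <= 1 -> `|dil t| <= t.
Proof.
case/andP=> t0 t1; apply: mx_norm_le_entries => [|i j]; first exact: ltW.
rewrite (ord1 i) mxE ger0_norm ?exprn_ge0 ?(ltW t0) //.
by apply: exprn_le_self; rewrite ?weight_gt0 ?(ltW t0).
Qed.

Lemma Lam_sqr t : 0 < t -> Lam p (t ^+ 2) = diag_mx (map_mx GRing.inv (dil t)).
Proof.
move=> t0; rewrite /Lam sqrtr_sqr gtr0_norm //; congr diag_mx.
by apply/rowP => i; rewrite !mxE /weight; case: ifP.
Qed.

Lemma Lam_sqr_dilK t : 0 < t -> Lam p (t ^+ 2) *m diag_mx (dil t) = 1%:M.
Proof.
move=> t0; apply/matrixP => i j; rewrite Lam_sqr // mul_diag_mx !mxE.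
case: eqP => [->|_]; rewrite ?mulr0n ?mulr0 // !mulr1n.
by rewrite mulVf // gt_eqF ?exprn_gt0.
Qed.

Lemma invmx_Lam_sqr t : 0 < t -> invmx (Lam p (t ^+ 2)) = diag_mx (dil t).
Proof.
move=> t0; have [Lam_unit _] := mulmx1_unit (Lam_sqr_dilK t0).
by rewrite -[invmx _]mulmx1 -(Lam_sqr_dilK t0) mulmxA mulVmx // mul1mx.
Qed.

Lemma Lambda_sqr_dil t Y : 0 < t -> Lambda (t ^+ 2) (diag_mx (dil t) *m Y) = Y.
Proof. by move=> t0; rewrite /Lambda mulmxA Lam_sqr_dilK // mul1mx. Qed.

Lemma Jdelta_sqr J t : 0 < t -> Jdelta J (t ^+ 2) =
  (fun Y => sandwich (map_mx GRing.inv (dil t)) (dil t) (J (diag_mx (dil t) *m Y))).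
Proof. by move=> t0; apply: funext => Y; rewrite /Jdelta invmx_Lam_sqr // Lam_sqr. Qed.

Lemma dil_coef t (s : seq 'I_N) (i j : 'I_N) : 0 < t ->
  (weight i <= \sum_(k <- s) weight k + weight j)%N ->
  (\prod_(k <- s) dil t 0 k) * ((dil t 0 i)^-1 * dil t 0 j) =
  t ^+ (\sum_(k <- s) weight k + weight j - weight i).
Proof.
move=> t0 wi; rewrite expfB_cond ?gt_eqF // exprD -prodrXr !mxE.
under eq_bigr do rewrite mxE.
by rewrite -mulrA [_^-1 * _]mulrC.
Qed.

Lemma dil_ratio t (i j : 'I_N) : 0 < t -> (weight i <= weight j)%N ->
  (dil t 0 i)^-1 * dil t 0 j = t ^+ (weight j - weight i).
Proof.
move=> t0; have := dil_coef (s := [::]) (i := i) (j := j) t0.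
by rewrite !big_nil mul1r add0n.
Qed.

Lemma dil_ratio_lower_left t (i j : 'I_N) : 0 < t -> (weight j < weight i)%N ->
  (dil t 0 i)^-1 * dil t 0 j = t^-1.
Proof.
move=> t0 wji; rewrite !mxE; have [-> ->] : weight i = 2 /\ weight j = 1.
  by move: wji (weight_le2 i) (weight_gt0 j); lia.
by rewrite expr2 invfM -mulrA mulVf ?gt_eqF ?mulr1.
Qed.

Lemma Jdelta_sqr_entry J t Y i j : 0 < t ->
  Jdelta J (t ^+ 2) Y i j =
  (dil t 0 i)^-1 * dil t 0 j * J (diag_mx (dil t) *m Y) i j.
Proof. by move=> t0; rewrite Jdelta_sqr // sandwich_entry mxE mulrAC. Qed.

Lemma partials_Jdelta_sqr_entry (U : set 'cV[R]_N) J t s Y i j :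
  open U -> smooth_on U J -> 0 < t -> s != [::] -> U (diag_mx (dil t) *m Y) ->
  partials s (fun Y => Jdelta J (t ^+ 2) Y - Jst R N) Y i j =
  (\prod_(l <- s) dil t 0 l) * ((dil t 0 i)^-1 * dil t 0 j)
    * partials s J (diag_mx (dil t) *m Y) i j.
Proof.
move=> oU sJ t0 s_nil UdY; rewrite partials_subr_cst // Jdelta_sqr //.
rewrite (partials_sandwich_dilate _ _ oU sJ) // sandwich_entry !mxE.
by rewrite mulrAC !mulrA.
Qed.

Definition wpart Y : 'cV[R]_2 := \col_(k < 2) Y (widen_ord (isT : (2 <= N)%N) k) 0.

Lemma dil_decomp t Y : diag_mx (dil t) *m Y =
  t *: emb p (wpart Y) + t ^+ 2 *: (Y - emb p (wpart Y)).
Proof.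
apply/matrixP => k c; rewrite (ord1 c) mul_diag_mx !mxE /weight.
case: k => [[|[|k]] hk] /=; last by rewrite mulr0 add0r subr0.
all: by rewrite (_ : widen_ord _ _ = Ordinal hk) ?subrr ?mulr0 ?addr0 //; apply: val_inj.
Qed.

Lemma norm_sub_wpart_le Y : `|Y - emb p (wpart Y)| <= `|Y|.
Proof.
apply: mx_norm_le_entries => // k c; rewrite (ord1 c) !mxE.
case: k => [[|[|k]] hk] /=; last by rewrite subr0 mx_entry_le_norm.
all: by rewrite (_ : widen_ord _ _ = Ordinal hk) ?subrr ?normr0 //; apply: val_inj.
Qed.

Lemma Jst_weight_neq (i j : 'I_N) : weight i != weight j -> Jst R N i j = 0.
Proof.
rewrite mxE /weight; case: i j => [i hi] [j hj] /= wij.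
case: ifP => [/andP[ej /eqP ij]|_].
  by move: wij ej; rewrite ij; case: j {hj ij} => [|[|j]].
case: ifP => [/andP[oj /eqP ij]|//].
by move: wij oj; rewrite -ij; case: i {hi ij} => [|[|i]].
Qed.

End Dilation.

Section UniformEstimates.
Variables (R : realType) (p : nat).
Local Notation N := p.*2.+2.
Variables (K : set 'cV[R]_N) (B : R).
Hypotheses (B_ge0 : 0 <= B) (K_le : forall Y, K Y -> `|Y| <= B).

Lemma dil_mul_norm_le t Y : 0 < t <= 1 -> K Y -> `|diag_mx (dil p t) *m Y| <= t * B.
Proof.
move=> /[dup] /andP[t0 _] t01 KY; rewrite (le_trans (diag_mulmx_norm_le _ _)) //.
by apply: ler_pM => //; [exact: dil_norm_le | exact: K_le].
Qed.

Lemma near_dil (P : set 'cV[R]_N) : (\forall y \near (0 : 'cV[R]_N), P y) ->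
  \forall t \near 0^'+, forall Y, K Y -> P (diag_mx (dil p t) *m Y).
Proof.
move=> /nbhs_normP[r /= r0 Pr]; have B1 : 0 < B + 1 by rewrite ltr_wpDl.
near=> t => Y KY.
have t0 : 0 < t by near: t; exact: nbhs_right_gt.
have t1 : t <= 1 by near: t; exact: nbhs_right_le.
have tBr : t * (B + 1) < r.
  by rewrite -ltr_pdivlMr //; near: t; exact: nbhs_right_lt (divr_gt0 r0 B1).
apply: Pr; rewrite /ball_ /= sub0r normrN.
rewrite (le_lt_trans (dil_mul_norm_le _ KY)) ?t0 // (le_lt_trans _ tBr) //.
by rewrite ler_pM2l // lerDl.
Unshelve. all: by end_near.
Qed.

Lemma near_dil_cont (V : normedModType R) (g : 'cV[R]_N -> V) e :
  {for 0, continuous g} -> 0 < e ->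
  \forall t \near 0^'+, forall Y, K Y -> `|g (diag_mx (dil p t) *m Y) - g 0| <= e.
Proof.
move=> /cvgrPdist_le /(_ e) g0 e0.
apply: (near_dil (P := fun y => `|g y - g 0| <= e)).
by apply: filterS (g0 e0) => y; rewrite distrC.
Qed.

Lemma near_dil_entry_vanish (g : 'cV[R]_N -> 'M[R]_N) i j e :
  {for 0, continuous g} -> 0 < e ->
  \forall t \near 0^'+, forall Y, K Y -> `|t * g (diag_mx (dil p t) *m Y) i j| <= e.
Proof.
move=> g0 e0; set c := `|g 0 i j| + 1; have c0 : 0 < c by rewrite ltr_wpDl.
near=> t.
have t0 : 0 < t by near: t; exact: nbhs_right_gt.
have tc : t * c <= e.
  by rewrite -ler_pdivlMr //; near: t; exact: nbhs_right_ltW (divr_gt0 e0 c0).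
have g_near : forall Y, K Y -> `|g (diag_mx (dil p t) *m Y) - g 0| <= 1.
  by near: t; exact: near_dil_cont.
move=> Y KY; rewrite normrM gtr0_norm // (le_trans _ tc) // ler_pM2l //.
rewrite -[X in `|X|](subrK (g 0 i j)) (le_trans (ler_normD _ _)) // addrC lerD2l.
exact: le_trans (mx_entry_dist_le _ _ _ _) (g_near _ KY).
Unshelve. all: by end_near.
Qed.

Lemma lower_left_entry_dil (J : 'cV[R]_N -> 'M[R]_N) t Y i j :
  J 0 i j = 0 -> (forall z, ('d J 0 (emb p z)) i j = 0) ->
  let y := diag_mx (dil p t) *m Y in
  J y i j = (J y - (J 0 + 'd J 0 y)) i j + t ^+ 2 * ('d J 0 (Y - emb p (wpart Y))) i j.
Proof.
move=> J0 dJ_emb y.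
have -> : 'd J 0 y = t *: 'd J 0 (emb p (wpart Y)) + t ^+ 2 *: 'd J 0 (Y - emb p (wpart Y)).
  by rewrite /y dil_decomp linearD !linearZ_LR.
by rewrite !mxE J0 dJ_emb mulr0 !add0r subrK.
Qed.

Lemma near_lower_left_quotient (J : 'cV[R]_N -> 'M[R]_N) i j e :
  differentiable J 0 -> J 0 i j = 0 -> (forall z, ('d J 0 (emb p z)) i j = 0) ->
  0 < e ->
  \forall t \near 0^'+, forall Y, K Y -> `|t^-1 * J (diag_mx (dil p t) *m Y) i j| <= e.
Proof.
move=> dJ J0 dJ_emb e0; have [k k0 dJ_le] := linear_lipschitz (diff_continuous dJ).
have B1 : 0 < B + 1 by rewrite ltr_wpDl.
pose e1 := e / 2 / (B + 1); have e10 : 0 < e1 by rewrite !divr_gt0.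
have J_taylor := (eqaddoP _ _ _ _).1 (diff_locally dJ) e1 e10.
near=> t.
have t0 : 0 < t by near: t; exact: nbhs_right_gt.
have t1 : t <= 1 by near: t; exact: nbhs_right_le.
have t01 : 0 < t <= 1 by rewrite t0 t1.
have tkB : t * (k * (B + 1)) <= e / 2.
  rewrite -ler_pdivlMr ?mulr_gt0 //; near: t.
  by apply: nbhs_right_ltW; rewrite !divr_gt0 ?mulr_gt0.
have rem : forall Y, K Y -> let y := diag_mx (dil p t) *m Y in
    `|J y - (J 0 + 'd J 0 y)| <= e1 * `|y|.
  near: t; apply: (near_dil (P := fun y => `|J y - (J 0 + 'd J 0 y)| <= e1 * `|y|)).
  by apply: filterS J_taylor => y; rewrite !fctE /shift addr0.
move=> Y KY; rewrite (lower_left_entry_dil _ _ J0 dJ_emb) mulrDr (splitr e).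
rewrite (le_trans (ler_normD _ _)) // lerD //.
  rewrite normrM gtr0_norm ?invr_gt0 // ler_pdivrMl //.
  rewrite (le_trans (mx_entry_le_norm _ i j)) // (le_trans (rem _ KY)) //.
  rewrite (le_trans (ler_wpM2l (ltW e10) (dil_mul_norm_le t01 KY))) //.
  by rewrite mulrCA ler_pM2l // /e1 mulrAC ler_pdivrMr // ler_pM2l ?divr_gt0 // lerDl.
rewrite mulrA expr2 mulrA mulVf ?gt_eqF // mul1r normrM gtr0_norm //.
rewrite (le_trans _ tkB) // ler_pM2l // (le_trans (mx_entry_le_norm _ i j)) //.
rewrite (le_trans (dJ_le _)) // ler_pM2l // (le_trans (norm_sub_wpart_le _)) //.
by rewrite (le_trans (K_le KY)) // lerDl.
Unshelve. all: by end_near.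
Qed.

End UniformEstimates.

Section Eventually.
Variable R : realType.

Lemma near_at_right0_ex (P : R -> Prop) :
  (\forall t \near 0^'+, P t) -> exists2 t0, 0 < t0 & forall t, 0 < t < t0 -> P t.
Proof.
move=> /nbhs_normP[r /= r0 Pr]; exists r => // t /andP[t0 tr].
by apply: Pr => //; rewrite /ball_ /= sub0r normrN gtr0_norm.
Qed.

Lemma near_forall_size T (F : set_system T) {FF : Filter F} (I : finType)
    (P : seq I -> T -> Prop) k :
  (forall s, \forall x \near F, P s x) ->
  \forall x \near F, forall s, (size s <= k)%N -> P s x.
Proof.
elim: k P => [|k IH] P HP; first by apply: filterS (HP [::]) => x Px [].
have Hcons := filter_forall FF (fun i => IH _ (fun s => HP (i :: s))).
by apply: filterS (filterI (HP [::]) Hcons) => x [Pnil Pcons] [//|i s]; apply: Pcons.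
Qed.

End Eventually.

Section Rescaling.
Variables (R : realType) (p : nat).
Local Notation N := p.*2.+2.
Variables (U : set 'cV[R]_N) (J : 'cV[R]_N -> 'M[R]_N).
Hypotheses (oU : open U) (U0 : U 0) (sJ : smooth_on U J) (J0 : J 0 = Jst R N)
  (Jhol : J_holomorphic [set z | U (emb p z)] J (@emb R p)).
Variables (K : set 'cV[R]_N) (B : R).
Hypotheses (B_ge0 : 0 <= B) (K_le : forall Y, K Y -> `|Y| <= B).
Variable eps : R.
Hypothesis eps_gt0 : 0 < eps.

Lemma near_dil_in_U : \forall t \near 0^'+, forall Y, K Y -> U (diag_mx (dil p t) *m Y).
Proof. by apply: (near_dil B_ge0 K_le); apply: open_nbhs_nbhs. Qed.

Lemma partials_continuous0 s : {for 0, continuous (partials s J)}.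
Proof. exact: differentiable_continuous (sJ s U0). Qed.

Lemma near_Jdelta_entry (i j : 'I_N) : \forall t \near 0^'+, forall Y, K Y ->
  `|(Jdelta J (t ^+ 2) Y - Jst R N) i j| <= eps.
Proof.
have J_cont0 := partials_continuous0 (s := [::]).
case: (ltngtP (weight i) (weight j)) => wij.
- near=> t; have t0 : 0 < t by near: t; exact: nbhs_right_gt.
  have small : forall Y, K Y -> `|t * J (diag_mx (dil p t) *m Y) i j| <= eps.
    by near: t; exact: (near_dil_entry_vanish B_ge0 K_le i j J_cont0 eps_gt0).
  have wji : (weight j - weight i = 1)%N.
    by move: wij (weight_le2 j) (weight_gt0 i); lia.
  move=> Y KY; rewrite mx_entryB Jdelta_sqr_entry // (dil_ratio t0 (ltnW wij)) wji.
  by rewrite (Jst_weight_neq _ (negbT (ltn_eqF wij))) subr0 expr1 small.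
- have /andP[i2 j2] : (2 <= i)%N && (j < 2)%N by rewrite -weight_ltE.
  have dJ0 : differentiable J 0 := sJ [::] U0.
  have J0ij : J 0 i j = 0 by rewrite J0 (Jst_weight_neq _ (negbT (gtn_eqF wij))).
  near=> t; have t0 : 0 < t by near: t; exact: nbhs_right_gt.
  have small : forall Y, K Y -> `|t^-1 * J (diag_mx (dil p t) *m Y) i j| <= eps.
    near: t; apply: (near_lower_left_quotient B_ge0 K_le dJ0 J0ij) => // z.
    exact: (diff_emb_lower_left oU U0 Jhol dJ0 z i2 j2).
  move=> Y KY; rewrite mx_entryB Jdelta_sqr_entry // (dil_ratio_lower_left t0 wij).
  by rewrite (Jst_weight_neq _ (negbT (gtn_eqF wij))) subr0 small.
- near=> t; have t0 : 0 < t by near: t; exact: nbhs_right_gt.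
  have close : forall Y, K Y -> `|J (diag_mx (dil p t) *m Y) - J 0| <= eps.
    by near: t; exact: (near_dil_cont B_ge0 K_le J_cont0 eps_gt0).
  move=> Y KY; rewrite mx_entryB Jdelta_sqr_entry // (dil_ratio t0 (eq_leq wij)) wij.
  rewrite subnn expr0 mul1r -J0.
  exact: le_trans (mx_entry_dist_le _ _ _ _) (close _ KY).
Unshelve. all: by end_near.
Qed.

Lemma near_partials_Jdelta_entry l s (i j : 'I_N) :
  \forall t \near 0^'+, forall Y, K Y ->
    `|partials (l :: s) (fun Y => Jdelta J (t ^+ 2) Y - Jst R N) Y i j| <= eps.
Proof.
have D_cont0 := partials_continuous0 (s := l :: s).
have wi : (weight i <= \sum_(k <- l :: s) weight k + weight j)%N.
  have := sum_weight_ge (l :: s); have := weight_gt0 j; have := weight_le2 i.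
  by rewrite /=; lia.
move Ee : (\sum_(k <- l :: s) weight k + weight j - weight i)%N => e.
have entry t Y : 0 < t -> U (diag_mx (dil p t) *m Y) ->
    partials (l :: s) (fun Y => Jdelta J (t ^+ 2) Y - Jst R N) Y i j
    = t ^+ e * partials (l :: s) J (diag_mx (dil p t) *m Y) i j.
  by move=> t0 UY; rewrite (partials_Jdelta_sqr_entry i j oU sJ) // dil_coef // Ee.
have [e0|e_gt0] := posnP e.
  have [s0 l2 i2 j2] : [/\ s = [::], (l < 2)%N, (2 <= i)%N & (j < 2)%N].
    by apply: sum_weight_le_weight; rewrite -subn_eq0 Ee e0.
  have D0 : partials (l :: s) J 0 i j = 0.
    rewrite s0 /= deriveE; last exact: (sJ [::] U0).
    rewrite -(emb_basis_vec (p := p) R l2).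
    exact: (diff_emb_lower_left oU U0 Jhol (sJ [::] U0) _ i2 j2).
  near=> t; have t0 : 0 < t by near: t; exact: nbhs_right_gt.
  have close : forall Y, K Y ->
      `|partials (l :: s) J (diag_mx (dil p t) *m Y) - partials (l :: s) J 0| <= eps.
    by near: t; exact: (near_dil_cont B_ge0 K_le D_cont0 eps_gt0).
  have UY : forall Y, K Y -> U (diag_mx (dil p t) *m Y) by near: t; exact: near_dil_in_U.
  move=> Y KY; rewrite entry //; last exact: UY.
  rewrite e0 expr0 mul1r -[X in `|X|]subr0 -D0.
  exact: le_trans (mx_entry_dist_le _ _ _ _) (close _ KY).
near=> t; have t0 : 0 < t by near: t; exact: nbhs_right_gt.
have t1 : t <= 1 by near: t; exact: nbhs_right_le.
have small : forall Y, K Y ->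
    `|t * partials (l :: s) J (diag_mx (dil p t) *m Y) i j| <= eps.
  by near: t; exact: (near_dil_entry_vanish B_ge0 K_le i j D_cont0 eps_gt0).
have UY : forall Y, K Y -> U (diag_mx (dil p t) *m Y) by near: t; exact: near_dil_in_U.
move=> Y KY; rewrite entry //; last exact: UY.
apply: le_trans (small _ KY).
rewrite !normrM ler_wpM2r // !ger0_norm ?exprn_ge0 ?(ltW t0) //.
by apply: exprn_le_self; rewrite ?(ltW t0).
Unshelve. all: by end_near.
Qed.

Lemma near_partials_Jdelta_small k : \forall t \near 0^'+,
  forall s, (size s <= k)%N -> forall Y, K Y ->
    `|partials s (fun Y => Jdelta J (t ^+ 2) Y - Jst R N) Y| <= eps.
Proof.
apply: (near_forall_size (P := fun s t => forall Y, K Y ->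
  `|partials s (fun Y => Jdelta J (t ^+ 2) Y - Jst R N) Y| <= eps)) => s.
have entries : \forall t \near 0^'+, forall i j : 'I_N, forall Y, K Y ->
    `|partials s (fun Y => Jdelta J (t ^+ 2) Y - Jst R N) Y i j| <= eps.
  apply: filter_forall => i; apply: filter_forall => j.
  by case: s => [|l s]; [exact: near_Jdelta_entry | exact: near_partials_Jdelta_entry].
apply: filterS entries => t small Y KY.
by apply: mx_norm_le_entries (ltW eps_gt0) _ => i j; apply: small.
Qed.

End Rescaling.

Theorem lemma3p2 (R : realType) (p : nat)
  (U : set 'cV[R]_(p.*2.+2)) (J : 'cV[R]_(p.*2.+2) -> 'M[R]_(p.*2.+2)) :
  open U -> U 0 -> smooth_on U J ->
  J 0 = Jst R (p.*2.+2) ->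
  J_holomorphic [set zeta | U (emb p zeta)] J (@emb R p) ->
  forall (k : nat) (K : set 'cV[R]_(p.*2.+2)), (0 < k)%N -> compact K ->
  forall eps : R, 0 < eps -> exists d0 : R, 0 < d0 /\
    forall d : R, 0 < d < d0 ->
      K `<=` @Lambda R p d @` U /\
      forall (s : seq 'I_(p.*2.+2)), (size s <= k)%N ->
        forall Z, K Z ->
          `| partials s (fun Y => Jdelta J d Y - Jst R (p.*2.+2)) Z | <= eps.
Proof.
move=> oU U0 sJ J0 Jhol k K _ cK eps eps_gt0.
have [B [B_ge0 K_le]] : exists B : R, 0 <= B /\ forall Y, K Y -> `|Y| <= B.
  have [M [Mreal KM]] := compact_bounded cK.
  exists (`|M| + 1); split => [|Y KY]; first by rewrite addr_ge0.
  by apply: KM => //; rewrite (le_lt_trans (real_ler_norm Mreal)) // ltrDl.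
have [t0 t0_gt0 small] := near_at_right0_ex (filterI
  (near_dil_in_U oU U0 B_ge0 K_le)
  (near_partials_Jdelta_small oU U0 sJ J0 Jhol B_ge0 K_le eps_gt0 k)).
exists (t0 ^+ 2); split => [|d /andP[d_gt0 d_lt]]; first by rewrite exprn_gt0.
have sqrt_d : 0 < Num.sqrt d < t0.
  rewrite sqrtr_gt0 d_gt0 /= -ltr_sqr ?nnegrE ?sqrtr_ge0 ?(ltW t0_gt0) //.
  by rewrite sqr_sqrtr // ltW.
have [inU bound] := small _ sqrt_d.
rewrite -(sqr_sqrtr (ltW d_gt0)); split => [Y KY|]; last exact: bound.
exists (diag_mx (dil p (Num.sqrt d)) *m Y); first exact: inU.
by rewrite Lambda_sqr_dil // sqrtr_gt0.
Qed.
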